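(* Let $(K,L)$ and $(K',L')$ be pairs consisting of a finite simplicial set and a simplicial subset, and let $r,s\geq 0$. Let $\mu^{K,K'}:\mathbb{Z}^{\mathrm{sd}^rK}\otimes\mathbb{Z}^{\mathrm{sd}^sK'}\to\mathbb{Z}^{\mathrm{sd}^{r+s}(K\times K')}$ be the ring homomorphism \[\mu^{K,K'}=\mathbf{m}\circ\big((\mathrm{pr}_1)^*\otimes(\mathrm{pr}_2)^*\big)\circ\big((\gamma^s_{\mathrm{sd}^rK})^*\otimes(\gamma^r_{\mathrm{sd}^sK'})^*\big),\] where $(\gamma^s_{\mathrm{sd}^r K})^*:\mathbb{Z}^{\mathrm{sd}^rK}\to\mathbb{Z}^{\mathrm{sd}^{r+s}K}$ and $(\gamma^r_{\mathrm{sd}^sK'})^*:\mathbb{Z}^{\mathrm{sd}^sK'}\to\mathbb{Z}^{\mathrm{sd}^{r+s}K'}$ are induced by the iterated last vertex maps, $\mathrm{pr}_1,\mathrm{pr}_2$ are the projections $\mathrm{sd}^{r+s}(K\times K')\to\mathrm{sd}^{r+s}K$, $\mathrm{sd}^{r+s}K'$ (i.e. $\mathrm{sd}^{r+s}$ applied to the projections of $K\times K'$), and $\mathbf{m}$ is the multiplication of the commutative ring $\mathbb{Z}^{\mathrm{sd}^{r+s}(K\times K')}$. Regard $\mathbb{Z}^{(K,L)}_r\otimes\mathbb{Z}^{(K',L')}_s$ as a subring of $\mathbb{Z}^{\mathrm{sd}^rK}\otimes\mathbb{Z}^{\mathrm{sd}^sK'}$. Then $\mu^{K,K'}$ maps $\mathbb{Z}^{(K,L)}_r\otimes\mathbb{Z}^{(K',L')}_s$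 into $\mathbb{Z}^{(K\times K',(K\times L')\cup(L\times K'))}_{r+s}$, hence restricts to a ring homomorphism \[\mu^{(K,L),(K',L')}:\mathbb{Z}^{(K,L)}_r\otimes\mathbb{Z}^{(K',L')}_s\to\mathbb{Z}^{(K\times K',(K\times L')\cup(L\times K'))}_{r+s},\] and this homomorphism is natural in both pairs with respect to morphisms of pairs (maps of simplicial sets $f:K_1\to K$ with $f(L_1)\subseteq L$).
   Context: $\mathbb{Z}^\Delta$ is the simplicial commutative ring $[p]\mapsto \mathbb{Z}[t_0,\dots,t_p]/\langle 1-\sum t_i\rangle$ (an order preserving $\varphi:[p]\to[q]$ acts by $t_i\mapsto\sum_{\varphi(j)=i}t_j$); for a simplicial set $X$, $\mathbb{Z}^X:=\mathrm{Hom}_{\mathbb{S}}(X,\mathbb{Z}^\Delta)$ with pointwise operations, a commutative ring, contravariant in $X$. $\mathrm{sd}$ is the subdivision functor and $\gamma^n:\mathrm{sd}^n\to\mathrm{id}$ the $n$-fold iterated last vertex map ($\gamma^0=\mathrm{id}$, $\gamma^n_X=\gamma^{n-1}_X\circ\gamma_{\mathrm{sd}^{n-1}X}$). For a finite simplicial set $K$ and simplicial subset $L$, $\mathbb{Z}^{(K,L)}_r:=\ker(\mathbb{Z}^{\mathrm{sd}^rK}\to\mathbb{Z}^{\mathrm{sd}^rL})$; it is a direct summand of the free abelian group $\mathbb{Z}^{\mathrm{sd}^rK}$, so the tensor product of such kernels embeds in the tensor product of the ambient rings. *)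

From HB Require Import structures.
From mathcomp Require Import all_boot all_order all_algebra.
From mathcomp Require Import mpoly.
Set Implicit Arguments. Unset Strict Implicit. Unset Printing Implicit Defensive.
Import GRing.Theory.

(* Order preserving maps [p] -> [q]  ([p] = {0,...,p} = 'I_p.+1).      *)
Definition omono p q (f : {ffun 'I_p.+1 -> 'I_q.+1}) : bool :=
  [forall i : 'I_p.+1, forall j : 'I_p.+1, (i <= j)%N ==> (f i <= f j)%N].
Definition ordmap p q := {f : {ffun 'I_p.+1 -> 'I_q.+1} | omono f}.
Definition omap p q (f : ordmap p q) : 'I_p.+1 -> 'I_q.+1 := fun i => sval f i.

Lemma omono_id p : omono [ffun i : 'I_p.+1 => i].
Proof. by apply/forallP => i; apply/forallP => j; rewrite !ffunE; apply/implyP. Qed.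
Definition oid p : ordmap p p := exist (@omono p p) _ (omono_id p).

Lemma omono_comp p q r (g : ordmap q r) (f : ordmap p q) :
  omono [ffun i => omap g (omap f i)].
Proof.
case: f g => f hf [g hg]; rewrite /omap /=.
apply/forallP => i; apply/forallP => j; apply/implyP => hij; rewrite !ffunE /=.
have h1 : (f i <= f j)%N by move: hf => /forallP/(_ i)/forallP/(_ j)/implyP; apply.
by move: hg => /forallP/(_ (f i))/forallP/(_ (f j))/implyP; apply.
Qed.
Definition ocomp p q r (g : ordmap q r) (f : ordmap p q) : ordmap p r :=
  exist (@omono p r) _ (omono_comp g f).

Record sSet := SSet { sob :> nat -> Type;
                      sact : forall p q, ordmap p q -> sob q -> sob p }.
Arguments sact {s p q}.

Definition is_sset (X : sSet) : Prop :=
  (forall p (x : X p), sact (oid p) x = x) /\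
  (forall p q r (f : ordmap p q) (g : ordmap q r) (x : X r),
      sact (ocomp g f) x = sact f (sact g x)).

Definition degenerate (X : sSet) n (x : X n) : Prop :=
  exists m (phi : ordmap n m) (y : X m), (m < n)%N /\ x = sact phi y.

Definition finite_sset (X : sSet) : Prop :=
  (exists N, forall n, (N < n)%N -> forall x : X n, degenerate x) /\
  (forall n, exists (N : nat) (e : 'I_N -> X n),
      forall x : X n, ~ degenerate x -> exists i, x = e i).

Definition is_subset (X : sSet) (L : forall p, X p -> Prop) : Prop :=
  forall p q (f : ordmap p q) (x : X q), L q x -> L p (sact f x).
Definition is_smap (X Y : sSet) (f : forall p, X p -> Y p) : Prop :=
  forall p q (phi : ordmap p q) (x : X q), f p (sact phi x) = sact phi (f q x).

Definition prodS (K K' : sSet) : sSet :=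
  @SSet (fun p => (K p * K' p)%type) (fun p q f x => (sact f x.1, sact f x.2)).

(* Simplicial setoids: used to build subdivisions as colimits (quotients). *)
Record ssetoid := SSetoid { tob :> nat -> Type;
                            teqv : forall p, tob p -> tob p -> Prop;
                            tact : forall p q, ordmap p q -> tob q -> tob p }.
Arguments teqv {s p}.
Arguments tact {s p q}.

Definition toS (X : sSet) : ssetoid :=
  @SSetoid (fun p => X p) (fun p (x y : X p) => x = y) (fun p q f x => sact f x).

Inductive eqclos (T : Type) (R : T -> T -> Prop) : T -> T -> Prop :=
| ec_step x y : R x y -> eqclos R x y
| ec_refl x : eqclos R x x
| ec_sym x y : eqclos R x y -> eqclos R y x
| ec_trans x y z : eqclos R x y -> eqclos R y z -> eqclos R x z.

(* p-simplices of sd Delta^n = N(nonempty subsets of [n]) : chains *)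
Definition chainb p n (c : {ffun 'I_p.+1 -> {set 'I_n.+1}}) : bool :=
  [forall i, c i != set0] &&
  [forall i : 'I_p.+1, forall j : 'I_p.+1, (i <= j)%N ==> (c i \subset c j)].
Definition chain p n := {c : {ffun 'I_p.+1 -> {set 'I_n.+1}} | chainb c}.

Lemma chainb_pre p q n (c : chain q n) (f : ordmap p q) :
  chainb [ffun i => sval c (omap f i)].
Proof.
case: c => c /= /andP[c0 cm]; case: f => f hf; rewrite /omap /=.
apply/andP; split.
  by apply/forallP => i; rewrite ffunE; move: c0 => /forallP; apply.
apply/forallP => i; apply/forallP => j; apply/implyP => hij; rewrite !ffunE.
have h1 : (f i <= f j)%N by move: hf => /forallP/(_ i)/forallP/(_ j)/implyP; apply.
by move: cm => /forallP/(_ (f i))/forallP/(_ (f j))/implyP; apply.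
Qed.
Definition chain_pre p q n (c : chain q n) (f : ordmap p q) : chain p n :=
  exist (@chainb p n) _ (chainb_pre c f).

Lemma chainb_push p n m (psi : ordmap n m) (c : chain p n) :
  chainb [ffun i => omap psi @: sval c i].
Proof.
case: c => c /= /andP[c0 cm]; apply/andP; split.
  apply/forallP => i; rewrite ffunE.
  have /set0Pn [x hx] : c i != set0 by move: c0 => /forallP; apply.
  by apply/set0Pn; exists (omap psi x); apply/imsetP; exists x.
apply/forallP => i; apply/forallP => j; apply/implyP => hij; rewrite !ffunE.
by apply: imsetS; move: cm => /forallP/(_ i)/forallP/(_ j)/implyP; apply.
Qed.
(* sd Delta^psi : sd Delta^n -> sd Delta^m, sigma |-> psi(sigma) *)
Definition chain_push p n m (psi : ordmap n m) (c : chain p n) : chain p m :=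
  exist (@chainb p m) _ (chainb_push psi c).

Lemma max_chain_bound p n (c : chain p n) (i : 'I_p.+1) :
  (\max_(j in sval c i) (j : nat) < n.+1)%N.
Proof. by rewrite ltnS; apply/bigmax_leqP => j _; rewrite -ltnS. Qed.

Lemma omono_lastv p n (c : chain p n) :
  omono [ffun i : 'I_p.+1 => (inord (\max_(j in sval c i) (j : nat)) : 'I_n.+1)].
Proof.
apply/forallP => i; apply/forallP => j; apply/implyP => hij; rewrite !ffunE.
rewrite !inordK ?max_chain_bound //.
case: c => c /= /andP[_ cm].
have sub : c i \subset c j by move: cm => /forallP/(_ i)/forallP/(_ j)/implyP; apply.
apply/bigmax_leqP => k hk.
set j0 := j.
have hk2 := subsetP sub k hk.
exact: (@leq_bigmax_cond _ (fun j : 'I_n.+1 => j \in c j0) (fun j : 'I_n.+1 => (j : nat)) k hk2).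
Qed.
Definition lastv p n (c : chain p n) : ordmap p n := exist (@omono p n) _ (omono_lastv c).

(* Subdivision sd X = colim_{Delta^n -> X} sd Delta^n, presented as a
   quotient: p-simplices are classes of triples (n, x in X_n, c a p-chain
   in [n]) modulo (psi^* y, c) ~ (y, psi_* c). *)
Definition sdob (X : ssetoid) p := {n : nat & (X n * chain p n)%type}.
Definition sdact (X : ssetoid) p q (f : ordmap p q) (z : sdob X q) : sdob X p :=
  existT _ (projT1 z) ((projT2 z).1, chain_pre (projT2 z).2 f).
Definition sdstep (X : ssetoid) p (z w : sdob X p) : Prop :=
  exists psi : ordmap (projT1 z) (projT1 w),
    teqv (projT2 z).1 (tact psi (projT2 w).1) /\
    (projT2 w).2 = chain_push psi (projT2 z).2.
Definition sdeqv (X : ssetoid) p := eqclos (@sdstep X p).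
Definition sd (X : ssetoid) : ssetoid := @SSetoid (sdob X) (@sdeqv X) (@sdact X).

Definition sdmap (X Y : ssetoid) (f : forall p, X p -> Y p) :
  forall p, sd X p -> sd Y p :=
  fun p z => existT _ (projT1 z) (f _ (projT2 z).1, (projT2 z).2).
Fixpoint sdmapn n (X Y : ssetoid) (f : forall p, X p -> Y p) :
  forall p, iter n sd X p -> iter n sd Y p :=
  match n return forall p, iter n sd X p -> iter n sd Y p with
  | 0 => f
  | n'.+1 => @sdmap (iter n' sd X) (iter n' sd Y) (@sdmapn n' X Y f)
  end.

(* sd on simplicial subsets: the image of sd L -> sd X *)
Definition sdsub (X : ssetoid) (L : forall p, X p -> Prop) :
  forall p, sd X p -> Prop :=
  fun p z => exists w : sd X p, teqv z w /\ L _ (projT2 w).1.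
Fixpoint sdsubn n (X : ssetoid) (L : forall p, X p -> Prop) :
  forall p, iter n sd X p -> Prop :=
  match n return forall p, iter n sd X p -> Prop with
  | 0 => L
  | n'.+1 => @sdsub (iter n' sd X) (@sdsubn n' X L)
  end.

Definition gam (X : ssetoid) p (z : sd X p) : X p :=
  tact (lastv (projT2 z).2) (projT2 z).1.

(* iterated last vertex map gamma^r_{sd^s X} : sd^{r+s} X -> sd^s X,
   gamma^{r+1}_Y = gamma^r_Y o gamma_{sd^r Y}   (with Y = sd^s X) *)
Fixpoint gsplit r s (X : ssetoid) {struct r} :
  forall p, iter (r + s) sd X p -> iter s sd X p :=
  match r return forall p, iter (r + s) sd X p -> iter s sd X p with
  | 0 => fun p z => z
  | r'.+1 => fun p z => @gsplit r' s X p (@gam (iter (r' + s) sd X) p z)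
  end.

Definition castsd m n (e : m = n) (X : ssetoid) p :
  iter m sd X p -> iter n sd X p :=
  match e in _ = k return iter m sd X p -> iter k sd X p with
  | erefl => fun z => z end.

(* Z^Delta_p = Z[t_0,...,t_p]/<1 - sum t_i>  ~=  Z[t_1,...,t_p]
   ('X_k stands for t_{k+1}; t_0 = 1 - sum_k 'X_k).                     *)
Definition ZD p := {mpoly int[p]}.
Definition tvar p (j : 'I_p.+1) : ZD p :=
  (if unlift ord0 j is Some k then 'X_k else 1 - \sum_(k < p) 'X_k)%R.
(* phi^* : Z^Delta_q -> Z^Delta_p,  t_i |-> sum_{phi j = i} t_j *)
Definition zact p q (phi : ordmap p q) (P : ZD q) : ZD p :=
  comp_mpoly [tuple \sum_(j : 'I_p.+1 | omap phi j == lift ord0 k) tvar j | k < q]%R P.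

(* elements of Z^X = Hom_S(X, Z^Delta) *)
Definition is_hom (X : ssetoid) (F : forall p, X p -> ZD p) : Prop :=
  (forall p (x y : X p), teqv x y -> F p x = F p y) /\
  (forall p q (f : ordmap p q) (x : X q), F p (tact f x) = zact f (F q x)).

(* a in Z^{(K,L)}_r = ker (Z^{sd^r K} -> Z^{sd^r L}) *)
Definition in_relker r (K : sSet) (L : forall p, K p -> Prop)
    (a : forall p, iter r sd (toS K) p -> ZD p) : Prop :=
  @is_hom (iter r sd (toS K)) a /\
  (forall p z, @sdsubn r (toS K) L p z -> a p z = 0%R).

Definition pr1S (K K' : sSet) : forall p, toS (prodS K K') p -> toS K p :=
  fun p x => x.1.
Definition pr2S (K K' : sSet) : forall p, toS (prodS K K') p -> toS K' p :=
  fun p x => x.2.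
Definition prodmap (K1 K K1' K' : sSet) (f : forall p, K1 p -> K p)
    (g : forall p, K1' p -> K' p) : forall p, prodS K1 K1' p -> prodS K K' p :=
  fun p x => (f p x.1, g p x.2).

Definition relunion (K K' : sSet) (L : forall p, K p -> Prop)
    (L' : forall p, K' p -> Prop) : forall p, prodS K K' p -> Prop :=
  fun p x => L' p x.2 \/ L p x.1.

(* mu^{K,K'} on the elementary tensor a (x) b:
   pr_1^*(gamma^s_{sd^r K})^* a  *  pr_2^*(gamma^r_{sd^s K'})^* b      *)
Definition mu r s (K K' : sSet)
    (a : forall p, iter r sd (toS K) p -> ZD p)
    (b : forall p, iter s sd (toS K') p -> ZD p) :
    forall p, iter (r + s) sd (toS (prodS K K')) p -> ZD p :=
  fun p z =>
    (a p (@gsplit s r (toS K) p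
            (@castsd (r + s) (s + r) (addnC r s) (toS K) p
              (@sdmapn (r + s) (toS (prodS K K')) (toS K) (@pr1S K K') p z)))
     * b p (@gsplit r s (toS K') p (@sdmapn (r + s) (toS (prodS K K')) (toS K') (@pr2S K K') p z)))%R.

Definition pull r (K1 K : sSet) (f : forall p, K1 p -> K p)
    (a : forall p, iter r sd (toS K) p -> ZD p) :
    forall p, iter r sd (toS K1) p -> ZD p :=
  fun p z => a p (@sdmapn r (toS K1) (toS K) f p z).

From Pilot Require Import Defs.
From HB Require Import structures.
From mathcomp Require Import all_boot all_order all_algebra.
From mathcomp Require Import mpoly.
Set Implicit Arguments. Unset Strict Implicit. Unset Printing Implicit Defensive.
Import GRing.Theory.

(* Since sd X is presented as a quotient, every construction has to respect
   the identifications; for the last vertex map gamma this holds because a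
   monotone map of ordinals sends the maximum of a set to the maximum of its
   image.  Then mu a b is the pointwise product of a and b pulled back along
   morphisms of simplicial setoids, hence is again a simplicial map to Z^Delta.
   A simplex of the subdivided union lies over sd^(r+s)(L x K') or
   sd^(r+s)(K x L'); since gamma maps sd M into M for every subobject M, its
   image under gamma^s o pr_1 (resp. gamma^r o pr_2) lies in sd^r L
   (resp. sd^s L'), where one factor vanishes.  Naturality holds because sd^n
   and gamma commute with maps of simplicial sets. *)

(* [omap] alone would denote the option map of ssrfun, hence [Defs.omap]. *)
Lemma ordmap_homo p q (f : ordmap p q) : {homo (Defs.omap f) : i j / (i <= j)%N}.
Proof.
case: f => f f_mono i j; rewrite /Defs.omap /=.
by move: f_mono => /forallP/(_ i)/forallP/(_ j)/implyP.
Qed.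

Lemma omap_ocomp p q r (g : ordmap q r) (f : ordmap p q) i :
  Defs.omap (ocomp g f) i = Defs.omap g (Defs.omap f i).
Proof. by rewrite /Defs.omap /= ffunE. Qed.

Lemma chain_neq0 p n (c : chain p n) i : sval c i != set0.
Proof. by case: c => c /andP[/forallP c0 _] /=. Qed.

Lemma chain_pre_comp p q r n (c : chain r n) (g : ordmap q r) (f : ordmap p q) :
  chain_pre c (ocomp g f) = chain_pre (chain_pre c g) f.
Proof. by apply: val_inj; apply/ffunP => i; rewrite /= !ffunE omap_ocomp. Qed.

Lemma chain_pre_push p q n m (psi : ordmap n m) (c : chain q n) (f : ordmap p q) :
  chain_pre (chain_push psi c) f = chain_push psi (chain_pre c f).
Proof. by apply: val_inj; apply/ffunP => i; rewrite /= !ffunE. Qed.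

Lemma omap_lastv p n (c : chain p n) i :
  Defs.omap (lastv c) i = inord (\max_(j in sval c i) (j : nat)).
Proof. by rewrite /Defs.omap /= ffunE. Qed.

Lemma lastv_pre p q n (c : chain q n) (f : ordmap p q) :
  lastv (chain_pre c f) = ocomp (lastv c) f.
Proof. by apply: val_inj; apply/ffunP => i; rewrite /= !ffunE omap_lastv. Qed.

Lemma bigmax_imset_homo n m (f : 'I_n.+1 -> 'I_m.+1) (A : {set 'I_n.+1}) :
  {homo f : i j / (i <= j)%N} -> A != set0 ->
  \max_(k in f @: A) (k : nat) = f (inord (\max_(j in A) (j : nat))).
Proof.
move=> f_homo /set0Pn[j Aj].
have [|j0 Aj0 max_j0] :=
  @eq_bigmax_cond _ (fun j => j \in A) (fun j : 'I_n.+1 => (j : nat)).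
  by apply/card_gt0P; exists j.
rewrite max_j0 inord_val; apply/eqP; rewrite eqn_leq; apply/andP; split.
  apply/bigmax_leqP => _ /imsetP[k Ak ->]; apply: f_homo.
  by rewrite -max_j0; apply: (@leq_bigmax_cond _ (fun j => j \in A)).
exact: (@leq_bigmax_cond _ (fun k => k \in f @: A) _ _ (imset_f f Aj0)).
Qed.

Lemma lastv_push p n m (psi : ordmap n m) (c : chain p n) :
  lastv (chain_push psi c) = ocomp psi (lastv c).
Proof.
apply: val_inj; apply/ffunP => i; rewrite /= !ffunE.
rewrite bigmax_imset_homo ?chain_neq0 //; last exact: ordmap_homo.
by rewrite inord_val omap_lastv.
Qed.

Definition is_ssetoid (X : ssetoid) : Prop :=
  [/\ (forall p (x : X p), teqv x x),
      (forall p (x y : X p), teqv x y -> teqv y x),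
      (forall p (x y z : X p), teqv x y -> teqv y z -> teqv x z),
      (forall p q (f : ordmap p q) (x y : X q), teqv x y -> teqv (tact f x) (tact f y)) &
      (forall p q r (f : ordmap p q) (g : ordmap q r) (x : X r),
          tact (ocomp g f) x = tact f (tact g x))].

Definition is_smorph (X Y : ssetoid) (F : forall p, X p -> Y p) : Prop :=
  (forall p (x y : X p), teqv x y -> teqv (F p x) (F p y)) /\
  (forall p q (f : ordmap p q) (x : X q), F p (tact f x) = tact f (F q x)).

Definition is_subsetoid (X : ssetoid) (P : forall p, X p -> Prop) : Prop :=
  (forall p (x y : X p), teqv x y -> P p x -> P p y) /\
  (forall p q (f : ordmap p q) (x : X q), P q x -> P p (tact f x)).

Lemma is_ssetoid_toS (K : sSet) : is_sset K -> is_ssetoid (toS K).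
Proof. by case=> _ act_comp; split => //= [p x y z -> | p q f x y ->]. Qed.

Lemma is_smorph_toS (K1 K : sSet) (f : forall p, K1 p -> K p) :
  is_smap f -> @is_smorph (toS K1) (toS K) f.
Proof. by move=> f_smap; split => // p x y ->. Qed.

Lemma is_subsetoid_toS (K : sSet) (L : forall p, K p -> Prop) :
  is_subset L -> @is_subsetoid (toS K) L.
Proof. by move=> L_sub; split => // p x y ->. Qed.

Lemma sd_tact_eqv (X : ssetoid) p q (f : ordmap p q) (z w : sd X q) :
  teqv z w -> teqv (tact f z) (tact f w).
Proof.
elim=> [{}z {}w [psi [eq1 eq2]] | {}z | {}z {}w _ | {}z y {}w _ IH1 _ IH2].
- by apply: ec_step; exists psi; rewrite /= eq2 chain_pre_push.
- exact: ec_refl.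
- exact: ec_sym.
- exact: ec_trans IH1 IH2.
Qed.

Lemma is_ssetoid_sd (X : ssetoid) : is_ssetoid (sd X).
Proof.
split => [p x | p x y | p x y z | p q f x y | p q r f g [n [x c]]].
- exact: ec_refl.
- exact: ec_sym.
- exact: ec_trans.
- exact: sd_tact_eqv.
- by rewrite /= /sdact /= chain_pre_comp.
Qed.

Lemma is_ssetoid_iter_sd (X : ssetoid) n :
  is_ssetoid X -> is_ssetoid (iter n sd X).
Proof. by case: n => [|n] //= _; apply: is_ssetoid_sd. Qed.

Lemma is_smorph_comp (X Y Z : ssetoid) (F : forall p, X p -> Y p)
    (G : forall p, Y p -> Z p) :
  is_smorph F -> is_smorph G -> is_smorph (fun p x => G p (F p x)).
Proof.
case=> F_eqv F_act [G_eqv G_act]; split => [p x y xy | p q f x].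
  by apply: G_eqv; apply: F_eqv.
by rewrite F_act G_act.
Qed.

Lemma is_smorph_sdmap (X Y : ssetoid) (F : forall p, X p -> Y p) :
  is_smorph F -> is_smorph (@sdmap X Y F).
Proof.
case=> F_eqv F_act; split => [p z w | p q f [n [x c]]] //.
elim=> [{}z {}w [psi [eq1 eq2]] | {}z | {}z {}w _ | {}z y {}w _ IH1 _ IH2].
- by apply: ec_step; exists psi; split => //=; rewrite -F_act; apply: F_eqv.
- exact: ec_refl.
- exact: ec_sym.
- exact: ec_trans IH1 IH2.
Qed.

Lemma is_smorph_sdmapn n (X Y : ssetoid) (F : forall p, X p -> Y p) :
  is_smorph F -> is_smorph (@sdmapn n X Y F).
Proof. by move=> F_smorph; elim: n => [|n IH] //=; apply: is_smorph_sdmap. Qed.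

Lemma is_smorph_castsd m n (e : m = n) (X : ssetoid) : is_smorph (@castsd m n e X).
Proof. by case: n / e. Qed.

Lemma is_smorph_gam (X : ssetoid) : is_ssetoid X -> is_smorph (@gam X).
Proof.
case=> eqv_refl eqv_sym eqv_trans tact_eqv tact_comp.
split => [p z w | p q f [n [x c]]].
  elim=> [[n [x c]] [m [y d]] [psi /= [xy ->]] | | {}z {}w _ | {}z y {}w _ IH1 _ IH2] //.
  - by rewrite /gam /= lastv_push tact_comp; apply: tact_eqv.
  - exact: eqv_sym.
  - exact: eqv_trans IH1 IH2.
by rewrite /gam /= lastv_pre tact_comp.
Qed.

Lemma is_smorph_gsplit r s (X : ssetoid) : is_ssetoid X -> is_smorph (@gsplit r s X).
Proof.
move=> X_ssetoid; elim: r => [|r IH] /=; first by split.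
exact: is_smorph_comp (is_smorph_gam (is_ssetoid_iter_sd _ X_ssetoid)) IH.
Qed.

Lemma is_subsetoid_sdsub (X : ssetoid) (P : forall p, X p -> Prop) :
  @is_subsetoid (sd X) (@sdsub X P).
Proof.
split => [p x y xy [w [xw Pw]] | p q f x [w [xw Pw]]].
  by exists w; split => //; apply: ec_trans (ec_sym xy) xw.
by exists (tact f w); split => //; apply: sd_tact_eqv.
Qed.

Lemma is_subsetoid_sdsubn n (X : ssetoid) (P : forall p, X p -> Prop) :
  is_subsetoid P -> is_subsetoid (@sdsubn n X P).
Proof. by case: n => [|n] // _; apply: is_subsetoid_sdsub. Qed.

Lemma gam_sdsub (X : ssetoid) (P : forall p, X p -> Prop) p (z : sd X p) :
  is_ssetoid X -> is_subsetoid P -> sdsub P z -> P p (gam z).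
Proof.
move=> X_ssetoid [P_eqv P_tact] [w [zw Pw]].
have [_ eqv_sym _ _ _] := X_ssetoid.
have gam_zw := (is_smorph_gam X_ssetoid).1 _ _ _ zw.
exact: P_eqv (eqv_sym _ _ _ gam_zw) (P_tact _ _ _ _ Pw).
Qed.

Lemma gsplit_sdsubn r s (X : ssetoid) (P : forall p, X p -> Prop) p z :
  is_ssetoid X -> is_subsetoid P ->
  @sdsubn (r + s) X P p z -> @sdsubn s X P p (@gsplit r s X p z).
Proof.
move=> X_ssetoid P_sub; elim: r p z => [|r IH] //= p z Pz.
apply/IH/(gam_sdsub _ _ Pz); first exact: is_ssetoid_iter_sd.
exact: is_subsetoid_sdsubn.
Qed.

Lemma castsd_sdsubn m n (e : m = n) (X : ssetoid) (P : forall p, X p -> Prop) p z :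
  @sdsubn m X P p z -> @sdsubn n X P p (@castsd m n e X p z).
Proof. by case: n / e. Qed.

Lemma sdsubn_sdmapn n (X Y : ssetoid) (F : forall p, X p -> Y p)
    (P : forall p, X p -> Prop) (Q : forall p, Y p -> Prop) :
  is_smorph F -> (forall p x, P p x -> Q p (F p x)) ->
  forall p z, @sdsubn n X P p z -> @sdsubn n Y Q p (@sdmapn n X Y F p z).
Proof.
move=> F_smorph PQ; elim: n => [|n IH] p z; first exact: PQ.
case=> w [zw Pw]; exists (@sdmapn n.+1 X Y F p w); split; last exact: IH.
exact: (is_smorph_sdmapn n.+1 F_smorph).1.
Qed.

Lemma sdsubn_or n (X : ssetoid) (R P Q : forall p, X p -> Prop) :
  (forall p x, R p x -> P p x \/ Q p x) ->
  forall p z, @sdsubn n X R p z -> @sdsubn n X P p z \/ @sdsubn n X Q p z.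
Proof.
move=> RPQ; elim: n => [|n IH] p z; first exact: RPQ.
by case=> w [zw /IH[Pw | Qw]]; [left | right]; exists w.
Qed.

Lemma sdmapn_tact n (X Y : ssetoid) (F : forall p, X p -> Y p) :
  (forall p q f x, F p (tact f x) = tact f (F q x)) ->
  forall p q f x, @sdmapn n X Y F p (tact f x) = tact f (@sdmapn n X Y F q x).
Proof. by case: n => [|n] // _ p q f [m [x c]]. Qed.

Lemma sdmapn_comp n (X Y Z : ssetoid) (F : forall p, X p -> Y p)
    (G : forall p, Y p -> Z p) p z :
  @sdmapn n Y Z G p (@sdmapn n X Y F p z) = @sdmapn n X Z (fun p x => G p (F p x)) p z.
Proof. by elim: n p z => [|n IH] // p [m [x c]]; rewrite /= /sdmap /= IH. Qed.

Lemma sdmapn_castsd m n (e : m = n) (X Y : ssetoid) (F : forall p, X p -> Y p) p z :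
  @sdmapn n X Y F p (@castsd m n e X p z) = @castsd m n e Y p (@sdmapn m X Y F p z).
Proof. by case: n / e. Qed.

Lemma sdmapn_gsplit r s (X Y : ssetoid) (F : forall p, X p -> Y p) :
  (forall p q f x, F p (tact f x) = tact f (F q x)) ->
  forall p z, @sdmapn s X Y F p (@gsplit r s X p z)
            = @gsplit r s Y p (@sdmapn (r + s) X Y F p z).
Proof.
move=> F_tact; elim: r => [|r IH] p z //=.
by rewrite IH; case: z => m [x c]; rewrite /gam /= sdmapn_tact.
Qed.

Lemma is_hom_comp (X Y : ssetoid) (a : forall p, Y p -> ZD p)
    (G : forall p, X p -> Y p) :
  is_hom a -> is_smorph G -> is_hom (fun p z => a p (G p z)).
Proof.
case=> a_eqv a_act [G_eqv G_act]; split => [p x y xy | p q f x].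
  by apply: a_eqv; apply: G_eqv.
by rewrite G_act a_act.
Qed.

Lemma is_hom_mul (X : ssetoid) (a b : forall p, X p -> ZD p) :
  is_hom a -> is_hom b -> is_hom (fun p z => a p z * b p z)%R.
Proof.
case=> a_eqv a_act [b_eqv b_act]; split => [p x y xy | p q f x].
  by rewrite (a_eqv _ _ _ xy) (b_eqv _ _ _ xy).
by rewrite a_act b_act /zact rmorphM.
Qed.

Lemma is_smap_pr1 (K K' : sSet) : @is_smap (prodS K K') K (@pr1S K K').
Proof. by []. Qed.

Lemma is_smap_pr2 (K K' : sSet) : @is_smap (prodS K K') K' (@pr2S K K').
Proof. by []. Qed.

Section ProductMap.

Variables (r s : nat) (K K' : sSet).
Hypotheses (K_sset : is_sset K) (K'_sset : is_sset K').

Lemma mu_is_hom (a : forall p, iter r sd (toS K) p -> ZD p)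
    (b : forall p, iter s sd (toS K') p -> ZD p) :
  is_hom a -> is_hom b -> is_hom (@mu r s K K' a b).
Proof.
move=> a_hom b_hom; apply: is_hom_mul.
  apply: (is_hom_comp a_hom).
  apply: is_smorph_comp (is_smorph_gsplit _ _ (is_ssetoid_toS K_sset)).
  apply: is_smorph_comp (is_smorph_castsd _ _).
  exact/is_smorph_sdmapn/is_smorph_toS/is_smap_pr1.
apply: (is_hom_comp b_hom).
apply: is_smorph_comp (is_smorph_gsplit _ _ (is_ssetoid_toS K'_sset)).
exact/is_smorph_sdmapn/is_smorph_toS/is_smap_pr2.
Qed.

Lemma mu_vanish (L : forall p, K p -> Prop) (L' : forall p, K' p -> Prop)
    (a : forall p, iter r sd (toS K) p -> ZD p)
    (b : forall p, iter s sd (toS K') p -> ZD p) :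
  is_subset L -> is_subset L' ->
  (forall p z, @sdsubn r (toS K) L p z -> a p z = 0%R) ->
  (forall p z, @sdsubn s (toS K') L' p z -> b p z = 0%R) ->
  forall p z, @sdsubn (r + s) (toS (prodS K K')) (relunion L L') p z ->
    @mu r s K K' a b p z = 0%R.
Proof.
move=> L_sub L'_sub a_vanish b_vanish p z z_rel.
have [z_L' | z_L] := sdsubn_or (P := fun p x => L' p (@pr2S K K' p x))
  (Q := fun p x => L p (@pr1S K K' p x)) (fun _ _ => id) z_rel.
- rewrite /mu b_vanish ?mulr0 //.
  apply: gsplit_sdsubn (is_ssetoid_toS K'_sset) (is_subsetoid_toS L'_sub) _.
  apply: sdsubn_sdmapn z_L' => //.
  exact/is_smorph_toS/is_smap_pr2.
- rewrite /mu a_vanish ?mul0r //.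
  apply: gsplit_sdsubn (is_ssetoid_toS K_sset) (is_subsetoid_toS L_sub) _.
  apply: castsd_sdsubn; apply: sdsubn_sdmapn z_L => //.
  exact/is_smorph_toS/is_smap_pr1.
Qed.

Lemma mu_in_relker (L : forall p, K p -> Prop) (L' : forall p, K' p -> Prop)
    (a : forall p, iter r sd (toS K) p -> ZD p)
    (b : forall p, iter s sd (toS K') p -> ZD p) :
  is_subset L -> is_subset L' -> @in_relker r K L a -> @in_relker s K' L' b ->
  @in_relker (r + s) (prodS K K') (relunion L L') (@mu r s K K' a b).
Proof.
move=> L_sub L'_sub [a_hom a_vanish] [b_hom b_vanish]; split.
  exact: mu_is_hom.
exact: mu_vanish.
Qed.

End ProductMap.

Lemma mu_pull r s (K K' K1 K1' : sSet) (f : forall p, K1 p -> K p)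
    (g : forall p, K1' p -> K' p) (a : forall p, iter r sd (toS K) p -> ZD p)
    (b : forall p, iter s sd (toS K') p -> ZD p) :
  is_smap f -> is_smap g ->
  forall p z, @mu r s K1 K1' (@pull r K1 K f a) (@pull s K1' K' g b) p z
    = @mu r s K K' a b p
        (@sdmapn (r + s) (toS (prodS K1 K1')) (toS (prodS K K')) (prodmap f g) p z).
Proof.
move=> f_smap g_smap p z; rewrite /mu /pull !sdmapn_comp.
rewrite (sdmapn_gsplit (X := toS K1) (Y := toS K) f_smap).
rewrite (sdmapn_gsplit (X := toS K1') (Y := toS K') g_smap).
by rewrite sdmapn_castsd !sdmapn_comp.
Qed.

Theorem lemma3p1 (r s : nat) :
  (forall (K K' : sSet) (L : forall p, K p -> Prop) (L' : forall p, K' p -> Prop),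
     is_sset K -> is_sset K' -> finite_sset K -> finite_sset K' ->
     @is_subset K L -> @is_subset K' L' ->
     forall (a : forall p, iter r sd (toS K) p -> ZD p)
            (b : forall p, iter s sd (toS K') p -> ZD p),
       @in_relker r K L a -> @in_relker s K' L' b ->
       @in_relker (r + s) (prodS K K') (@relunion K K' L L') (@mu r s K K' a b))
  /\
  (forall (K K' K1 K1' : sSet) (L : forall p, K p -> Prop)
          (L' : forall p, K' p -> Prop) (L1 : forall p, K1 p -> Prop)
          (L1' : forall p, K1' p -> Prop)
          (f : forall p, K1 p -> K p) (g : forall p, K1' p -> K' p),
     is_sset K -> is_sset K' -> is_sset K1 -> is_sset K1' ->
     finite_sset K -> finite_sset K' -> finite_sset K1 -> finite_sset K1' ->
     @is_subset K L -> @is_subset K' L' -> @is_subset K1 L1 -> @is_subset K1' L1' ->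
     @is_smap K1 K f -> @is_smap K1' K' g ->
     (forall p x, L1 p x -> L p (f p x)) -> (forall p x, L1' p x -> L' p (g p x)) ->
     forall (a : forall p, iter r sd (toS K) p -> ZD p)
            (b : forall p, iter s sd (toS K') p -> ZD p),
       @in_relker r K L a -> @in_relker s K' L' b ->
       forall p (z : iter (r + s) sd (toS (prodS K1 K1')) p),
         @mu r s K1 K1' (@pull r K1 K f a) (@pull s K1' K' g b) p z
         = @mu r s K K' a b p
             (@sdmapn (r + s) (toS (prodS K1 K1')) (toS (prodS K K'))
                      (@prodmap K1 K K1' K' f g) p z)).
Proof.
split=> [K K' L L' K_sset K'_sset _ _ L_sub L'_sub a b | ].
  exact: mu_in_relker.
move=> K K' K1 K1' L L' L1 L1' f g _ _ _ _ _ _ _ _ _ _ _ _ f_smap g_smap _ _ a b _ _.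
exact: mu_pull.
Qed.
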